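(* Let $\mathcal{B}$ be a bounding family on $[n]^d$ and $f:[n]^d\to\mathbb{R}$. Then $f\in\mathcal{P}(\mathcal{B})$ if and only if $f(x)-f(y)\le d_{\mathcal{B}}(x,y)$ for all $x,y\in[n]^d$.
   Context: A bounding family is a tuple of $2d$ functions $l_1,u_1,\dots,l_d,u_d:[n-1]\to\mathbb{R}$ with $l_r(y)<u_r(y)$. $\mathcal{P}(\mathcal{B})$ is the set of $f:[n]^d\to\mathbb{R}$ with $l_r(x_r)\le f(x+\mathbf{e}_r)-f(x)\le u_r(x_r)$ for all $r\in[d]$ and $x$ with $x_r<n$. For $x,y\in[n]^d$, $$d_{\mathcal{B}}(x,y)=\sum_{r:x_r>y_r}\ \sum_{t=y_r}^{x_r-1}u_r(t)\ -\ \sum_{r:x_r<y_r}\ \sum_{t=x_r}^{y_r-1}l_r(t).$$ *)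

From mathcomp Require Import all_boot all_order all_algebra.
From mathcomp Require Import reals.
Set Implicit Arguments. Unset Strict Implicit. Unset Printing Implicit Defensive.
Import Order.TTheory GRing.Theory Num.Theory.
Local Open Scope ring_scope.

(* Conventions: [n] = {1,...,n} is encoded 0-based as 'I_n (value k <-> k+1).
   A point of [n]^d is x : {ffun 'I_d -> 'I_n}.
   [n-1] = {1,...,n-1} is encoded 0-based as {t : nat | t < n-1}; bounding
   functions are given as  l u : 'I_d -> nat -> R , only values at t < n.-1 matter. *)

Definition point (n d : nat) := {ffun 'I_d -> 'I_n}.

(* x + e_r, meaningful when x r + 1 < n *)
Definition shift (n d : nat) (x : point n d) (r : 'I_d) : point n d :=
  [ffun s => if s == r then insubd (x r) (x r).+1 else x s].

Definition bounding_family (R : realType) (n d : nat) (l u : 'I_d -> nat -> R) : Prop :=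
  forall (r : 'I_d) (t : nat), (t < n.-1)%N -> l r t < u r t.

Definition in_PB (R : realType) (n d : nat) (l u : 'I_d -> nat -> R)
  (f : point n d -> R) : Prop :=
  forall (r : 'I_d) (x : point n d), (x r < n.-1)%N ->
    l r (x r) <= f (shift x r) - f x <= u r (x r).

Definition dB (R : realType) (n d : nat) (l u : 'I_d -> nat -> R)
  (x y : point n d) : R :=
  \sum_(r < d | (y r < x r)%N) \sum_(y r <= t < x r) u r t
  - \sum_(r < d | (x r < y r)%N) \sum_(x r <= t < y r) l r t.

(* [d_B(x,y)] splits as a sum of one-dimensional terms, and raising the smaller
   of [x_r], [y_r] by one peels off exactly one step bound: [-l_r(x_r)] when
   [x_r < y_r], [u_r(y_r)] when [y_r < x_r].  For [f] in [P(B)] the increment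
   of [f] along that step obeys the same bound, so induction on the l1 distance
   between [x] and [y] gives [f(x) - f(y) <= d_B(x,y)].  Conversely, for
   [y = x + e_r] the two inequalities [f(y) - f(x) <= d_B(y,x) = u_r(x_r)] and
   [f(x) - f(y) <= d_B(x,y) = -l_r(x_r)] are exactly the defining ones. *)

From mathcomp Require Import all_boot all_order all_algebra.
From mathcomp Require Import reals.
From mathcomp Require Import zify lra.

Set Implicit Arguments.
Unset Strict Implicit.
Unset Printing Implicit Defensive.
Import Order.TTheory GRing.Theory Num.Theory.
Local Open Scope ring_scope.

Section Shift.
Variables (n d : nat).
Implicit Types (x y : point n d) (r s : 'I_d).

Lemma shiftE x r s : (x r < n.-1)%N ->
  nat_of_ord (shift x r s) = if s == r then (x r).+1 else x s.
Proof.
move=> xr_lt; rewrite ffunE; case: eqP => // _.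
by rewrite val_insubd; case: ifP => //; lia.
Qed.

Lemma big_shift {T : Type} {idx : T} {op : Monoid.com_law idx}
    (F : 'I_d -> nat -> T) x r : (x r < n.-1)%N ->
  \big[op/idx]_s F s (shift x r s)
  = op (F r (x r).+1) (\big[op/idx]_(s | s != r) F s (x s)).
Proof.
move=> xr_lt; rewrite (bigD1 r) //= shiftE // eqxx; congr (op _ _).
by apply: eq_bigr => s /negPf s_neq; rewrite shiftE // s_neq.
Qed.

Definition l1dist x y : nat := (\sum_s `|x s - y s|)%N.

Lemma l1distC x y : l1dist x y = l1dist y x.
Proof. by apply: eq_bigr => s _; rewrite distnC. Qed.

Lemma l1dist_shift x y r : (x r < y r)%N -> (l1dist (shift x r) y < l1dist x y)%N.
Proof.
move=> lt_xy; have xr_lt : (x r < n.-1)%N by have := ltn_ord (y r); lia.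
rewrite /l1dist (big_shift (fun s (a : nat) => (`|a - y s|)%N)) //.
by rewrite [X in (_ < X)%N](bigD1 r) //= !distnEr //; lia.
Qed.

End Shift.

Section Distance.
Variables (R : realType) (n d : nat) (l u : 'I_d -> nat -> R).
Implicit Types (x y : point n d) (r : 'I_d).

Definition dB1 r (a b : nat) : R :=
  \sum_(b <= t < a) u r t - \sum_(a <= t < b) l r t.

Lemma dBE x y : dB l u x y = \sum_r dB1 r (x r) (y r).
Proof.
rewrite /dB (big_mkcond (fun r => (y r < x r)%N)).
rewrite (big_mkcond (fun r => (x r < y r)%N)) -sumrB.
apply: eq_bigr => r _; rewrite /dB1.
case: (ltngtP (y r) (x r)) => [lt_yx|lt_xy|->].
- by rewrite (big_geq (ltnW lt_yx)) subr0.
- by rewrite (big_geq (ltnW lt_xy)) sub0r.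
- by rewrite !big_geq // subr0.
Qed.

Lemma dB1_id r a : dB1 r a a = 0.
Proof. by rewrite /dB1 !big_geq // subr0. Qed.

Lemma dB1_stepr r a b : (b < a)%N -> dB1 r a b = u r b + dB1 r a b.+1.
Proof.
by move=> lt_ba; rewrite /dB1 (big_geq (ltnW lt_ba)) (big_geq lt_ba) big_ltn // !subr0.
Qed.

Lemma dB1_stepl r a b : (a < b)%N -> dB1 r a b = - l r a + dB1 r a.+1 b.
Proof.
by move=> lt_ab; rewrite /dB1 (big_geq (ltnW lt_ab)) (big_geq lt_ab) big_ltn // !sub0r opprD.
Qed.

Lemma dB_id x : dB l u x x = 0.
Proof. by rewrite dBE big1 // => r _; rewrite dB1_id. Qed.

Lemma dB_shiftl x y r : (x r < y r)%N ->
  dB l u x y = - l r (x r) + dB l u (shift x r) y.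
Proof.
move=> lt_xy; have xr_lt : (x r < n.-1)%N by have := ltn_ord (y r); lia.
rewrite !dBE (big_shift (fun s (a : nat) => dB1 s a (y s))) // (bigD1 r) //=.
by rewrite dB1_stepl // -addrA.
Qed.

Lemma dB_shiftr x y r : (y r < x r)%N ->
  dB l u x y = u r (y r) + dB l u x (shift y r).
Proof.
move=> lt_yx; have yr_lt : (y r < n.-1)%N by have := ltn_ord (x r); lia.
rewrite !dBE (big_shift (fun s (b : nat) => dB1 s (x s) b)) // (bigD1 r) //=.
by rewrite dB1_stepr // -addrA.
Qed.

Lemma dB_to_shift x r : (x r < n.-1)%N -> dB l u x (shift x r) = - l r (x r).
Proof.
by move=> xr_lt; rewrite (@dB_shiftl _ _ r) ?dB_id ?addr0 // shiftE // eqxx.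
Qed.

Lemma dB_from_shift x r : (x r < n.-1)%N -> dB l u (shift x r) x = u r (x r).
Proof.
by move=> xr_lt; rewrite (@dB_shiftr _ _ r) ?dB_id ?addr0 // shiftE // eqxx.
Qed.

End Distance.

Section Characterization.
Variables (R : realType) (n d : nat) (l u : 'I_d -> nat -> R) (f : point n d -> R).

Lemma in_PB_le_dB : in_PB l u f -> forall x y, f x - f y <= dB l u x y.
Proof.
move=> fP x y; have [k] := ubnP (l1dist x y).
elim: k x y => // k IH x y; rewrite ltnS => dist_le.
case: (pickP (fun r => x r != y r)) => [r neq_xy | eq_xy]; last first.
  have -> : x = y by apply/ffunP => r; apply/val_inj/eqP/negbFE/eq_xy.
  by rewrite subrr dB_id.
case: (ltngtP (x r) (y r)) => [lt_xy | lt_yx | /val_inj eq_r]; last first.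
- by rewrite eq_r eqxx in neq_xy.
- have yr_lt : (y r < n.-1)%N by have := ltn_ord (x r); lia.
  have /andP[_ step_le] := fP r y yr_lt.
  have dist_lt : (l1dist x (shift y r) < k)%N.
    by rewrite l1distC (leq_trans (l1dist_shift lt_yx)) // l1distC.
  have := IH x (shift y r) dist_lt; rewrite (dB_shiftr l u lt_yx); lra.
- have xr_lt : (x r < n.-1)%N by have := ltn_ord (y r); lia.
  have /andP[step_ge _] := fP r x xr_lt.
  have dist_lt : (l1dist (shift x r) y < k)%N.
    exact: leq_trans (l1dist_shift lt_xy) dist_le.
  have := IH (shift x r) y dist_lt; rewrite (dB_shiftl l u lt_xy); lra.
Qed.

Lemma le_dB_in_PB : (forall x y, f x - f y <= dB l u x y) -> in_PB l u f.
Proof.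
move=> f_le r x xr_lt; have := f_le (shift x r) x; have := f_le x (shift x r).
rewrite dB_to_shift // dB_from_shift // => ? ?.
by apply/andP; split; lra.
Qed.

End Characterization.

Theorem lemma2p2 (R : realType) (n d : nat) (l u : 'I_d -> nat -> R)
  (hB : bounding_family n l u) (f : point n d -> R) :
  in_PB l u f <-> (forall x y : point n d, f x - f y <= dB l u x y).
Proof. by split; [exact: in_PB_le_dB | exact: le_dB_in_PB]. Qed.
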